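(* Let $(X,d)$, $(\Lambda,d_\Lambda)$ be compact metric spaces, $\tau:\Lambda\times X\to X$ continuous and $q:X\to\mathcal P(\Lambda)$ continuous. Assume: (M1) there is $s>0$ such that $\int_\Lambda|f(\tau(\lambda,x))-f(\tau(\lambda,y))|\,dq_x(\lambda)\le s\,d(x,y)$ for all $x,y\in X$ and all $f\in\mathrm{Lip}_1(X)$; (H2) there is $r\ge0$ with $d(\tau(\lambda_1,x),\tau(\lambda_2,x))\le r\,d_\Lambda(\lambda_1,\lambda_2)$ for all $\lambda_1,\lambda_2\in\Lambda$, $x\in X$; (H3) there is $t\ge0$ with $d_{MK}(q_x,q_y)\le t\,d(x,y)$ for all $x,y\in X$. Then there exists $c>0$ such that for every $f\in\mathrm{Lip}_1(X)$, the function $B_q(f)$ is $c$-Lipschitz on $X$.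
   Context: $\mathcal{P}(Y)$ is the set of Borel probability measures on a compact metric space $Y$, with $d_{MK}(\mu,\nu)=\sup_{f\in \mathrm{Lip}_1(Y)}\{\int f\,d\mu-\int f\,d\nu\}$, where $\mathrm{Lip}_1(Y)$ is the set of real $1$-Lipschitz functions on $Y$. The transfer operator is $B_q(f)(x)=\int_\Lambda f(\tau(\lambda,x))\,dq_x(\lambda)$. *)

From HB Require Import structures.
From mathcomp Require Import all_boot all_order all_algebra.
From mathcomp Require Import all_classical all_reals all_analysis.
Set Implicit Arguments. Unset Strict Implicit. Unset Printing Implicit Defensive.
Import Order.TTheory GRing.Theory Num.Theory.
Local Open Scope classical_set_scope.
Local Open Scope ring_scope.

Section MetricDefs.
Context {R : realType}.

Definition is_metric (T : Type) (d : T -> T -> R) : Prop :=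
  [/\ (forall x y, 0 <= d x y),
      (forall x y, d x y = 0 <-> x = y),
      (forall x y, d x y = d y x) &
      (forall x y z, d x z <= d x y + d y z)].

Definition metric_open (T : Type) (d : T -> T -> R) (A : set T) : Prop :=
  forall x, A x -> exists e : R, 0 < e /\ forall y, d x y < e -> A y.

Definition metric_compact (T : Type) (d : T -> T -> R) : Prop :=
  forall (I : Type) (U : I -> set T),
    (forall i, metric_open d (U i)) -> setT `<=` \bigcup_(i in setT) U i ->
    exists F : set I, finite_set F /\ setT `<=` \bigcup_(i in F) U i.

Definition borel_for (dT : measure_display) (T : measurableType dT)
  (d : T -> T -> R) : Prop :=
  forall A : set T, measurable A <-> smallest (sigma_algebra setT) (metric_open d) A.

Definition metric_continuous (A B : Type) (dA : A -> A -> R) (dB : B -> B -> R)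
  (f : A -> B) : Prop :=
  forall x (e : R), 0 < e -> exists del : R, 0 < del /\
    forall y, dA x y < del -> dB (f x) (f y) < e.

Definition real_dist (a b : R) : R := `|a - b|.

Definition metric_continuous2 (L X : Type) (dL : L -> L -> R) (dX : X -> X -> R)
  (tau : L -> X -> X) : Prop :=
  forall l x (e : R), 0 < e -> exists del : R, 0 < del /\
    forall l' x', dL l l' < del -> dX x x' < del ->
      dX (tau l x) (tau l' x') < e.

Definition Lip1 (T : Type) (d : T -> T -> R) (f : T -> R) : Prop :=
  forall x y, `|f x - f y| <= d x y.

Definition lipschitz_with (T : Type) (d : T -> T -> R) (c : R) (f : T -> R) : Prop :=
  forall x y, `|f x - f y| <= c * d x y.

Definition dMK (dT : measure_display) (T : measurableType dT) (d : T -> T -> R)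
  (mu nu : probability T R) : \bar R :=
  ereal_sup [set ((Rintegral mu setT f - Rintegral nu setT f)%:E) | f in Lip1 d].

Definition Bq (dL : measure_display) (L : measurableType dL) (X : Type)
  (q : X -> probability L R) (tau : L -> X -> X) (f : X -> R) (x : X) : R :=
  Rintegral (q x) setT (fun l => f (tau l x)).

End MetricDefs.

From HB Require Import structures.
From mathcomp Require Import all_boot all_order all_algebra.
From mathcomp Require Import all_classical all_reals all_analysis.
From mathcomp Require Import ring lra.
Set Implicit Arguments. Unset Strict Implicit. Unset Printing Implicit Defensive.
Import Order.TTheory GRing.Theory Num.Theory.
Local Open Scope classical_set_scope.
Local Open Scope ring_scope.

(* Split B_q f(x) - B_q f(y) as
     int (f(tau(l,x)) - f(tau(l,y))) dq_x  +  (int g dq_x - int g dq_y),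
   with g := f(tau(., y)).  (M1) bounds the first term by s d(x,y).  By (H2)
   g is r-Lipschitz, so g / (r + 1) is 1-Lipschitz and (H3) bounds the second
   term by (r + 1) t d(x,y).  Hence c := s + (r + 1) t works.  Compactness of X
   only serves to make g bounded, hence q_x-integrable. *)

Section MetricFacts.
Context {R : realType}.

Lemma lipschitz_metric_continuous (T : Type) (d : T -> T -> R) (K : R)
    (g : T -> R) :
  0 <= K -> lipschitz_with d K g -> metric_continuous d real_dist g.
Proof.
move=> K0 gK x e e0; have K1 : 0 < K + 1 by lra.
exists (e / (K + 1)); split; first exact: divr_gt0.
move=> y dxy; rewrite /real_dist; apply: (le_lt_trans (gK x y)).
apply: (le_lt_trans (ler_wpM2l K0 (ltW dxy))).
by rewrite mulrA ltr_pdivrMr // mulrDr mulr1 mulrC ltrDl.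
Qed.

Lemma metric_continuous_measurable (dT : measure_display) (T : measurableType dT)
    (d : T -> T -> R) (g : T -> R) :
  borel_for d -> metric_continuous d real_dist g -> measurable_fun setT g.
Proof.
move=> dB gC.
apply: (measurability _ (measurable_realfun.RGenOInfty.measurableE R)) => //.
move=> /= _ [_ [a ->] <-]; rewrite setTI; apply/dB; apply: sub_gen_smallest.
move=> x /=; rewrite in_itv /= andbT => ax.
have ax0 : 0 < g x - a by rewrite subr_gt0.
have [del [del0 hdel]] := gC x (g x - a) ax0.
exists del; split => // y /hdel; rewrite /real_dist /= in_itv /= andbT.
by move: (ler_norm (g x - g y)); lra.
Qed.

Lemma metric_compact_bounded (T : Type) (d : T -> T -> R) (z : T) :
  is_metric d -> metric_compact d -> exists M : R, forall w, d z w <= M.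
Proof.
move=> [d0 _ _ dtri] dK.
have [n w /= dzw|w _|F [/finite_fsetP [B ->] BU]] :=
    dK nat (fun n => [set w | d z w < n%:R]).
- exists (n%:R - d z w); split; first by rewrite subr_gt0.
  by move=> v dwv /=; have := dtri z w v; lra.
- by exists (Num.bound (d z w)) => //=; exact/archi_boundP/d0.
exists (\big[maxn/0%N]_(i <- finmap.enum_fset B) i)%:R => w.
have [i /= iB dzw] := BU w I.
apply/ltW/(lt_le_trans dzw); rewrite ler_nat.
by rewrite (big_rem i) //= leq_maxl.
Qed.

Lemma Lip1_compact_bounded (T : Type) (d : T -> T -> R) (f : T -> R) :
  is_metric d -> metric_compact d -> Lip1 d f -> exists M : R, forall w, `|f w| <= M.
Proof.
move=> dm dK f1.
have [[z _]|T0] := pselect (exists z : T, True); last first.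
  by exists 0 => w; exfalso; apply: T0; exists w.
have [M dzM] := metric_compact_bounded z dm dK.
exists (`|f z| + M) => w.
have : `|f w| <= `|f z| + `|f z - f w| by rewrite -[X in `|X|](subKr (f z)) ler_normB.
by have := f1 z w; have := dzM w; lra.
Qed.

Lemma lipschitz_with_of_sub_le (T : Type) (d : T -> T -> R) (c : R) (g : T -> R) :
  (forall x y, d x y = d y x) -> (forall x y, g x - g y <= c * d x y) ->
  lipschitz_with d c g.
Proof.
move=> dC gc x y; rewrite ler_norml gc andbT.
by have := gc y x; rewrite dC; lra.
Qed.

Lemma Rintegral_sub_le_dMK (dT : measure_display) (T : measurableType dT)
    (d : T -> T -> R) (mu nu : probability T R) (g : T -> R) (K b : R) :
  0 < K -> lipschitz_with d K g ->
  mu.-integrable setT (EFin \o g) -> nu.-integrable setT (EFin \o g) ->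
  (dMK d mu nu <= b%:E)%E ->
  Rintegral mu setT g - Rintegral nu setT g <= K * b.
Proof.
move=> K0 gK mug nug dMKb.
have g1 : Lip1 d (fun x => g x * K^-1).
  move=> x y; rewrite -mulrBl normrM normfV (gtr0_norm K0) ler_pdivrMr //.
  by rewrite mulrC.
have : ((Rintegral mu setT (fun x => g x * K^-1)
        - Rintegral nu setT (fun x => g x * K^-1))%:E <= b%:E)%E.
  by apply: le_trans dMKb; apply: ereal_sup_ubound; exists (fun x => g x * K^-1).
by rewrite lee_fin !RintegralZr // -mulrBl ler_pdivrMr // mulrC.
Qed.

End MetricFacts.

Section TransferOperator.
Context {R : realType} (dXd : measure_display) (X : measurableType dXd)
  (d : X -> X -> R) (dLd : measure_display) (L : measurableType dLd)
  (dL : L -> L -> R) (tau : L -> X -> X) (q : X -> probability L R).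
Hypotheses (dm : is_metric d) (dK : metric_compact d).
Hypotheses (dLm : is_metric dL) (dLB : borel_for dL).
Variables (r : R) (f : X -> R).
Hypotheses (r0 : 0 <= r) (f1 : Lip1 d f)
  (tauH2 : forall l1 l2 x, d (tau l1 x) (tau l2 x) <= r * dL l1 l2).

Lemma Lip1_comp_tau_lipschitz z : lipschitz_with dL r (fun l => f (tau l z)).
Proof. by move=> l1 l2; apply: le_trans (f1 _ _) (tauH2 l1 l2 z). Qed.

Lemma Lip1_comp_tau_integrable z (mu : probability L R) :
  mu.-integrable setT (EFin \o (fun l => f (tau l z))).
Proof.
apply: measurable_bounded_integrable => //.
- by apply: le_lt_trans (probability_le1 mu measurableT) _; rewrite ltry.
- apply: (metric_continuous_measurable dLB).
  exact: lipschitz_metric_continuous r0 (Lip1_comp_tau_lipschitz z).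
have [M fM] := Lip1_compact_bounded dm dK f1.
exists M; split; first exact: num_real.
by move=> M' MM' l _; apply: le_trans (fM _) _; lra.
Qed.

Lemma Bq_sub_le (s t : R) x y :
  (\int[q x]_(l in setT) (`|f (tau l x) - f (tau l y)|)%:E <= (s * d x y)%:E)%E ->
  (dMK dL (q x) (q y) <= (t * d x y)%:E)%E ->
  Bq q tau f x - Bq q tau f y <= (s + (r + 1) * t) * d x y.
Proof.
move=> M1 H3; rewrite /Bq.
set Fx := fun l => f (tau l x); set Fy := fun l => f (tau l y).
have [iFx iFy] := (Lip1_comp_tau_integrable x (q x), Lip1_comp_tau_integrable y (q x)).
have iD := integrableB measurableT iFx iFy.
have moving_point : Rintegral (q x) setT Fx - Rintegral (q x) setT Fy <= s * d x y.
  rewrite -RintegralB //.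
  apply: (@le_trans _ _ (Rintegral (q x) setT (fun l => `|Fx l - Fy l|))).
    apply: le_Rintegral => //; first exact: integrable_norm iD.
    by move=> l _; exact: ler_norm.
  rewrite -lee_fin /Rintegral fineK //.
  by have := integrable_fin_num measurableT (integrable_norm iD).
have moving_measure :
    Rintegral (q x) setT Fy - Rintegral (q y) setT Fy <= (r + 1) * (t * d x y).
  apply: Rintegral_sub_le_dMK H3; first exact: ltr_wpDl r0 ltr01.
  - move=> l1 l2; apply: le_trans (Lip1_comp_tau_lipschitz y l1 l2) _.
    by apply: ler_wpM2r; [case: dLm | rewrite lerDl].
  - exact: iFy.
  - exact: Lip1_comp_tau_integrable.
by move: moving_point moving_measure; rewrite mulrDl mulrA; lra.
Qed.

End TransferOperator.

Theorem mainTheorem6 (R : realType)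
  (dXd : measure_display) (X : measurableType dXd) (d : X -> X -> R)
  (dLd : measure_display) (L : measurableType dLd) (dL : L -> L -> R)
  (tau : L -> X -> X) (q : X -> probability L R) :
  is_metric d -> metric_compact d -> borel_for d ->
  is_metric dL -> metric_compact dL -> borel_for dL ->
  metric_continuous2 dL d tau ->
  (* q : X -> P(Lambda) continuous for the weak topology on P(Lambda) *)
  (forall g : L -> R, metric_continuous dL real_dist g ->
     metric_continuous d real_dist (fun x => Rintegral (q x) setT g)) ->
  (* (M1) *)
  (exists s : R, 0 < s /\ forall x y (f : X -> R), Lip1 d f ->
     (\int[q x]_(l in setT) (`|f (tau l x) - f (tau l y)|)%:E <= (s * d x y)%:E)%E) ->
  (* (H2) *)
  (exists r : R, 0 <= r /\ forall l1 l2 x, d (tau l1 x) (tau l2 x) <= r * dL l1 l2) ->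
  (* (H3) *)
  (exists t : R, 0 <= t /\ forall x y, (dMK dL (q x) (q y) <= (t * d x y)%:E)%E) ->
  exists c : R, 0 < c /\ forall f : X -> R, Lip1 d f -> lipschitz_with d c (Bq q tau f).
Proof.
move=> dm dK _ dLm _ dLB _ _ [s [s0 M1]] [r [r0 H2]] [t [t0 H3]].
exists (s + (r + 1) * t); split; first by rewrite ltr_wpDr // mulr_ge0 //; lra.
move=> f f1; apply: lipschitz_with_of_sub_le; first by case: dm.
move=> x y; have Bq_xy := Bq_sub_le dm dK dLm dLB r0 f1 H2 (M1 x y f f1) (H3 x y).
exact: Bq_xy.
Qed.
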